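(* Let $\mathcal{X}$ be a hereditary class above the Bell number with finite distinguishing number $k_{\mathcal{X}}$, and let $\ell_{\mathcal{X}},d_{\mathcal{X}},c_{\mathcal{X}}$ be constants such that every $G\in\mathcal{X}$ contains an induced subgraph $G'$ which is a strong $(\ell_{\mathcal{X}},d_{\mathcal{X}})$-graph with $|V(G)\setminus V(G')|<c_{\mathcal{X}}$ (such constants exist whenever $k_{\mathcal{X}}<\infty$). Then $\mathcal{X}\supseteq\mathcal{P}(w,H)$ for some infinite almost periodic word $w$ and some graph $H$ with loops allowed, of order at most $\ell_{\mathcal{X}}$, on the alphabet of $w$.
   Context: Graphs in classes are finite, simple, loopless; hereditary = closed under induced subgraphs and isomorphism. Speed $\mathcal{X}_n$: number of graphs in $\mathcal{X}$ on vertex set $\{1,\dots,n\}$. Above the Bell number: $\mathcal{X}_n\ge n^{(1-o(1))n}$ (equivalently speed at least the Bell number $B_n$). Distinguishing number: for $X\subseteq V(G)$, disjoint sets $U_1,\dots,U_m$ are distinguished by $X$ if vertices of the same $U_i$ have the same neighbourhood in $X$ and vertices in different $U_i$ have different neighbourhoods in $X$. $k_{\mathcal{X}}=\infty$ if for all $k,m$ some $G\in\mathcal{X}$ and $X\subseteq V(G)$ distinguish at least $m$ sets of size at least $k$; otherwise $k_{\mathcal{X}}$ is the least $k$ such that for some $m$, no vertex subset of a graph in $\mathcal{X}$ distinguishes more than $m$ sets of size at least $k$. $(\ell,d)$-graphs: for $U,W\subseteq V(G)$ let $\Delta(U,W)=\max\{|N(u)\cap W|,|N(w)\cap U|:u\in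 U,w\in W\}$ and $\overline{\Delta}(U,W)$ the same with $\overline N(x)=V(G)\setminus(N(x)\cup\{x\})$ in place of $N(x)$. A partition $\{V_1,\dots,V_{\ell'}\}$ of $V(G)$ is an $(\ell,d)$-partition if $\ell'\le\ell$ and for all (not necessarily distinct) $i,j$, $\Delta(V_i,V_j)\le d$ or $\overline\Delta(V_i,V_j)\le d$. It is strong if each bag has at least $5\cdot 2^{\ell}d$ vertices; a strong $(\ell,d)$-graph is one admitting a strong $(\ell,d)$-partition. Words: maps $w:S\to A$, $S=\{1,\dots,n\}$ or $\mathbb{N}$, $A$ finite; a factor of $w$ is a word $f$ with $f_i=w_{i+s}$ for some fixed $s\ge0$. Infinite $w$ is almost periodic if for each factor $f$ there is $k_f$ such that every factor of length $\ge k_f$ contains $f$. For $H$ with loops allowed on $A$ and $u_1<\dots<u_m$ positive integers, $G_{w,H}(u_1,\dots,u_m)$ has vertex set $\{u_i\}$ and $u_iu_j$ is an edge iff ($|u_i-u_j|=1$ and $w_{u_i}w_{u_j}\notin E(H)$) or ($|u_i-u_j|>1$ and $w_{u_i}w_{u_j}\in E(H)$), loops of $H$ accounting for equal letters. $\mathcal{P}(w,H)$ is the class of graphs isomorphic to some $G_{w,H}(u_1,\dots,u_m)$. *)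

From mathcomp Require Import all_boot.
Set Implicit Arguments. Unset Strict Implicit. Unset Printing Implicit Defensive.

(* A (labelled) graph on vertex set 'I_n = {0,...,n-1} (standing for {1,...,n})
   is given by its set of ordered adjacent pairs. *)
Definition graph (n : nat) := {set ('I_n * 'I_n)}.

Definition simple_graph n (g : graph n) : Prop :=
  (forall i, (i, i) \notin g) /\ (forall i j, ((i, j) \in g) = ((j, i) \in g)).

Definition graph_class := forall n : nat, graph n -> Prop.

(* Induced subgraph along an injection f : 'I_m -> 'I_n (also covers isomorphisms). *)
Definition induced n m (g : graph n) (f : 'I_m -> 'I_n) : graph m :=
  [set p : 'I_m * 'I_m | (f p.1, f p.2) \in g].

Definition class_of_simple_graphs (X : graph_class) : Prop :=
  forall n (g : graph n), X n g -> simple_graph g.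

Definition hereditary (X : graph_class) : Prop :=
  forall n m (g : graph n) (f : 'I_m -> 'I_n), injective f -> X n g -> X m (induced g f).

(* Above the Bell number: X_n >= n^{(1-o(1))n}, i.e. for every eps = 1/k > 0,
   eventually X_n >= n^{(1-1/k) n}, i.e. X_n^k >= n^{(k-1) n}. *)
Definition above_Bell (X : graph_class) : Prop :=
  forall k, 0 < k -> exists N, forall n, N <= n ->
    exists S : {set graph n}, (forall g, g \in S -> X n g) /\
      n ^ ((k - 1) * n) <= #|S| ^ k.

Definition nbhd n (g : graph n) (x : 'I_n) : {set 'I_n} := [set y | (x, y) \in g].
Definition nonnbhd n (g : graph n) (x : 'I_n) : {set 'I_n} := ~: (nbhd g x :|: [set x]).

Definition distinguishes n m (g : graph n) (Xs : {set 'I_n}) (U : 'I_m -> {set 'I_n}) : Prop :=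
  (forall i j, i != j -> [disjoint U i & U j]) /\
  (forall i u v, u \in U i -> v \in U i -> nbhd g u :&: Xs = nbhd g v :&: Xs) /\
  (forall i j u v, i != j -> u \in U i -> v \in U j -> nbhd g u :&: Xs != nbhd g v :&: Xs).

Definition dist_number_infinite (X : graph_class) : Prop :=
  forall k m, exists n (g : graph n) (Xs : {set 'I_n}) m' (U : 'I_m' -> {set 'I_n}),
    [/\ X n g, m <= m', (forall i, k <= #|U i|) & distinguishes g Xs U].

Definition Delta_le n (N : 'I_n -> {set 'I_n}) (U W : {set 'I_n}) (d : nat) : Prop :=
  (forall u, u \in U -> #|N u :&: W| <= d) /\ (forall w, w \in W -> #|N w :&: U| <= d).

(* strong (l,d)-graph: the bags are the nonempty fibres of p, so there are at most l of them *)
Definition strong_ld_graph n (g : graph n) (l d : nat) : Prop :=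
  exists p : 'I_n -> 'I_l,
    let V := fun i => [set v | p v == i] in
    (forall i j, Delta_le (nbhd g) (V i) (V j) d \/ Delta_le (nonnbhd g) (V i) (V j) d) /\
    (forall i, V i != set0 -> 5 * 2 ^ l * d <= #|V i|).

(* Finite factor of an infinite word (positions 1,2,3,...; w 0 is unused) *)
Definition factor a (w : nat -> 'I_a) (s L : nat) : seq 'I_a :=
  [seq w (s + i) | i <- iota 0 L].

Definition almost_periodic a (w : nat -> 'I_a) : Prop :=
  forall s L, 1 <= s -> exists kf, forall s' L', 1 <= s' -> kf <= L' ->
    infix (factor w s L) (factor w s' L').

Definition natdist (x y : nat) : nat := (x - y) + (y - x).

Definition GwH_adj a (w : nat -> 'I_a) (H : rel 'I_a) (x y : nat) : bool :=
  ((natdist x y == 1) && ~~ H (w x) (w y)) || ((1 < natdist x y) && H (w x) (w y)).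

Definition in_P a (w : nat -> 'I_a) (H : rel 'I_a) m (g : graph m) : Prop :=
  exists u : 'I_m -> nat,
    (forall i, 0 < u i) /\ (forall i j : 'I_m, i < j -> u i < u j) /\
    exists sigma : 'I_m -> 'I_m, bijective sigma /\
      forall i j, ((i, j) \in g) = GwH_adj w H (u (sigma i)) (u (sigma j)).

(* Label the vertices of a graph of the class by their bag in a near (l,d)-partition (fewer
   than c vertices remain unlabelled) and flip the adjacency between every pair of dense bags.
   This "twist" has maximum degree at most l d, and along an induced path of the twist the graph
   is exactly G_{w,H}, where w is the word of bag labels and H the dense pairs; such words are
   therefore good: all their G_{w,H} lie in the class.
   If the twists had no induced paths on L vertices, their components would have at most
   s = (l d + 1)^L vertices, and a graph on n vertices would be determined by its labelling, its
   dense pairs, its unlabelled rows and its twist: 2^O(n) n^(n - n/s) graphs, below the Bell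
   number. Hence good words of every length exist, for a single H by pigeonhole, and compactness
   with a recurrence argument turns them into an almost periodic infinite word. *)

From Stdlib Require Import ClassicalEpsilon Classical.
From mathcomp Require Import all_boot zify ring.

Set Implicit Arguments. Unset Strict Implicit. Unset Printing Implicit Defensive.

Lemma card_bigcup_le (I : Type) (T : finType) (r : seq I) (P : pred I) (F : I -> {set T}) :
  #|\bigcup_(i <- r | P i) F i| <= \sum_(i <- r | P i) #|F i|.
Proof.
apply: (big_ind2 (fun (A : {set T}) m => #|A| <= m)) => [|A a B b HA HB|//].
  by rewrite cards0.
exact: leq_trans (leq_card_setU A B).1 (leq_add HA HB).
Qed.

Section InducedPaths.

Variables (T : finType) (S : rel T).

Fixpoint ball (x : T) (k : nat) : {set T} :=
  if k is k'.+1 then ball x k' :|: \bigcup_(z in ball x k') [set y | S z y] else [set x].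

Lemma ball_mono x k k' : k <= k' -> ball x k \subset ball x k'.
Proof.
move=> /subnK <-; elim: (k' - k) => [|e IH] //=.
exact: subset_trans IH (subsetUl _ _).
Qed.

Lemma ball_step x k z y : z \in ball x k -> S z y -> y \in ball x k.+1.
Proof. by move=> Hz Hzy; apply/setUP; right; apply/bigcupP; exists z; rewrite ?inE. Qed.

Lemma ball_stepP x k y :
  y \in ball x k.+1 -> y \in ball x k \/ exists2 z, z \in ball x k & S z y.
Proof. by case/setUP => [|/bigcupP [z Hz]]; [left | rewrite inE; right; exists z]. Qed.

Lemma card_ball D x k : (forall z, #|[set y | S z y]| <= D) -> #|ball x k| <= D.+1 ^ k.
Proof.
move=> HD; elim: k => [|k IH] /=; first by rewrite cards1.
apply: leq_trans (leq_card_setU _ _).1 _.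
apply: leq_trans (leq_add (leqnn _) (card_bigcup_le _ _ _)) _.
apply: (@leq_trans (#|ball x k| + \sum_(z in ball x k) D)).
  by rewrite leq_add2l; apply: leq_sum => z _; apply: HD.
by rewrite sum_nat_const expnS mulSn leq_add // mulnC leq_mul.
Qed.

Lemma mem_ball_last x p z k :
  z \in ball x k -> path S z p -> last z p \in ball x (k + size p).
Proof.
elim: p z k => [|y p IH] z k Hz /=; first by rewrite addn0.
by case/andP=> Hzy Hp; rewrite addnS -addSn; apply: IH (ball_step Hz Hzy) Hp.
Qed.

Lemma connect_ball x y : connect S x y -> exists k, y \in ball x k.
Proof. by case/connectP=> p Hp ->; exists (0 + size p); apply: mem_ball_last; rewrite ?inE. Qed.

Definition at_dist x k y :=
  (y \in ball x k) && (if k is k'.+1 then y \notin ball x k' else true).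

Lemma at_dist_exists x k y : y \in ball x k -> exists2 k', k' <= k & at_dist x k' y.
Proof.
elim: k => [|k IH] Hy; first by exists 0; rewrite /at_dist ?Hy.
case Hk: (y \in ball x k); last by exists k.+1; rewrite /at_dist ?Hy ?Hk.
by have [k' Hk' Hd] := IH Hk; exists k'; rewrite ?leqW.
Qed.

Lemma at_dist_notin x k y k' : at_dist x k y -> k' < k -> y \notin ball x k'.
Proof.
case: k => [|k] //= /andP [_ Hn]; rewrite ltnS => Hk'; apply: contra Hn.
by apply: (subsetP (ball_mono x Hk')).
Qed.

Lemma at_dist_geodesic x k y : at_dist x k y ->
  exists v : nat -> T, [/\ v k = y, forall i, i <= k -> at_dist x i (v i)
                         & forall i, i < k -> S (v i) (v i.+1)].
Proof.
elim: k y => [|k IH] y Hy.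
  by exists (fun _ => y); split => // i; rewrite leqn0 => /eqP ->.
case/andP: (Hy) => Hin Hn.
have [Hk|[z Hz Hzy]] := ball_stepP Hin; first by rewrite Hk in Hn.
have Hdz : at_dist x k z.
  rewrite /at_dist Hz; case: k {IH Hy Hin} Hz Hzy Hn => [|k] // Hz Hzy.
  by apply: contra => Hz'; apply: ball_step Hz' Hzy.
have [v [Hvk Hvd Hvs]] := IH z Hdz.
exists (fun i => if i == k.+1 then y else v i); split; first by rewrite eqxx.
  by move=> i Hi; case: eqP => [->|Hne] //; apply: Hvd; lia.
move=> i Hi; rewrite (_ : (i == k.+1) = false); last by apply/eqP; lia.
case: (i =P k) => [->|Hne]; first by rewrite eqxx Hvk.
by rewrite (_ : (i.+1 == k.+1) = false); [apply: Hvs; lia | apply/eqP; lia].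
Qed.

Definition induced_path L (v : nat -> T) :=
  (forall i j, i < L -> j < L -> S (v i) (v j) = (natdist i j == 1)) /\
  (forall i j, i < L -> j < L -> v i = v j -> i = j).

Lemma induced_path_prefix L L' v : L' <= L -> induced_path L v -> induced_path L' v.
Proof.
by move=> HL [H1 H2]; split=> i j Hi Hj; [apply: H1 | apply: H2]; exact: leq_trans HL.
Qed.

Hypotheses (Ssym : symmetric S) (Sirr : irreflexive S).

Lemma geodesic_induced_path x k (v : nat -> T) :
  (forall i, i <= k -> at_dist x i (v i)) -> (forall i, i < k -> S (v i) (v i.+1)) ->
  induced_path k.+1 v.
Proof.
move=> Hd Hs.
have in_ball i : i <= k -> v i \in ball x i by case/Hd/andP.
have Sij i j : i < j -> j <= k -> S (v i) (v j) = (j == i.+1).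
  move=> Hij Hj; case: eqP => [->|/eqP Hne]; first exact: Hs (leq_trans Hij Hj).
  apply/negP => HS; have Hij1 : i.+1 < j by rewrite ltn_neqAle eq_sym Hne.
  have := at_dist_notin (Hd j Hj) Hij1.
  by rewrite (ball_step (in_ball i (ltnW (leq_trans Hij Hj))) HS).
split=> i j; rewrite !ltnS => Hi Hj.
  case: (ltngtP i j) => [Hij|Hij|->]; last by rewrite Sirr /natdist subnn.
    by rewrite Sij //; apply/eqP/eqP; rewrite /natdist; lia.
  by rewrite Ssym Sij //; apply/eqP/eqP; rewrite /natdist; lia.
case: (ltngtP i j) => [Hij|Hij|//] Hv.
  by have := at_dist_notin (Hd j Hj) Hij; rewrite -Hv in_ball.
by have := at_dist_notin (Hd i Hi) Hij; rewrite Hv in_ball.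
Qed.

(* A vertex at distance [k >= L] from [x] would be the end of an induced path on [k.+1 > L]
   vertices, so a component lies in the ball of radius [L]. *)
Lemma card_connect_le D L :
  (forall z, #|[set y | S z y]| <= D) -> (forall v, ~ induced_path L v) ->
  forall x, #|[set y | connect S x y]| <= D.+1 ^ L.
Proof.
move=> HD HnP x; apply: leq_trans (card_ball x L HD).
apply/subset_leq_card/subsetP => y; rewrite inE => /connect_ball [k Hk].
have [k' _ Hd] := at_dist_exists Hk.
have [v [_ Hvd Hvs]] := at_dist_geodesic Hd.
case: (ltnP k' L) => HkL.
  by case/andP: Hd => Hy _; apply: (subsetP (ball_mono x (ltnW HkL))).
case: (HnP v); apply: (@induced_path_prefix k'.+1); first exact: leqW.
exact: geodesic_induced_path Hvd Hvs.
Qed.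

End InducedPaths.

Lemma ex_uniform_threshold (I : finType) (Q : I -> nat -> Prop) :
  (forall i L L', Q i L -> L <= L' -> Q i L') -> (forall i, exists L, Q i L) ->
  exists L, forall i, Q i L.
Proof.
move=> Hup Hex.
suff [L HL] : exists L, forall i, i \in enum I -> Q i L.
  by exists L => i; apply: HL; rewrite mem_enum.
elim: (enum I) => [|j s [L1 H1]]; first by exists 0.
have [L2 H2] := Hex j; exists (maxn L1 L2) => i; rewrite inE => /orP [/eqP ->|Hi].
  by apply: Hup H2 _; rewrite leq_maxr.
by apply: Hup (H1 i Hi) _; rewrite leq_maxl.
Qed.

Lemma infinite_pigeonhole (I : finType) (P : I -> nat -> Prop) :
  (forall i L L', P i L' -> L <= L' -> P i L) -> (forall L, exists i, P i L) ->
  exists i, forall L, P i L.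
Proof.
move=> Hdown Hex; apply: NNPP => Hn.
have Hfail i : exists L, ~ P i L by apply: not_all_ex_not => HP; apply: Hn; exists i.
have [L HL] := @ex_uniform_threshold _ (fun i L => ~ P i L)
  (fun i L L' HnP HL HP => HnP (Hdown _ _ _ HP HL)) Hfail.
by have [i Hi] := Hex L; apply: (HL i).
Qed.

Section Languages.

Variable a : nat.
Implicit Types (F G : seq 'I_a -> Prop) (u v : seq 'I_a).

Definition factor_closed F := forall u v, infix u v -> F v -> F u.
Definition unbounded F := forall L, exists2 v, size v = L & F v.
Definition extendable F u := forall L, exists2 v, size v = L & F (u ++ v).

Lemma extendable_rcons F u :
  factor_closed F -> extendable F u -> exists x, extendable F (rcons u x).
Proof.
move=> HF Hu.
have [x Hx] : exists x, forall L, exists2 v, size v = L & F (rcons u x ++ v).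
  apply: infinite_pigeonhole.
  move=> x L L' [v Hv HFv] HL; exists (take L v); first by rewrite size_takel // Hv.
  apply: HF HFv; rewrite -[in X in infix _ X](cat_take_drop L v) catA; exact: prefix_infix.
move=> L; have [[|x v] // [Hv] HFv] := Hu L.+1.
  by exists x, v; rewrite // cat_rcons.
by exists x => L; have [v] := Hx L; exists v.
Qed.

Section Konig.

Variables (a0 : 'I_a) (F : seq 'I_a -> Prop).

Definition next_letter u : 'I_a := epsilon (inhabits a0) (fun x => extendable F (rcons u x)).

Fixpoint prefix_word k : seq 'I_a :=
  if k is k'.+1 then rcons (prefix_word k') (next_letter (prefix_word k')) else [::].

End Konig.

Lemma konig_word F : factor_closed F -> unbounded F ->
  exists w : nat -> 'I_a, forall s L, F (factor w s L).
Proof.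
move=> HF Hinf; have [[|a0 ?] // _ _] := Hinf 1.
have Hext k : extendable F (prefix_word a0 F k).
  elim: k => [|k IH] /=; first by move=> L; have [v] := Hinf L; exists v.
  apply: (epsilon_spec (inhabits a0) (fun x => extendable F (rcons _ x))).
  exact: extendable_rcons.
pose w k := next_letter a0 F (prefix_word a0 F k).
have Epre k : prefix_word a0 F k = [seq w i | i <- iota 0 k].
  by elim: k => [|k IH] //; rewrite -[in RHS]addn1 iotaD map_cat -IH cats1.
exists w => s L.
have HsL : F (prefix_word a0 F (s + L)) by have [[|] // _] := Hext (s + L) 0; rewrite cats0.
apply: HF HsL; rewrite Epre iotaD map_cat; apply: infix_catl.
have -> : iota s L = map (addn s) (iota 0 L) by rewrite -iotaDl addn0.
by rewrite /factor -map_comp infix_refl.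
Qed.

Definition avoiding G u v := G v /\ ~~ infix u v.

Definition refine_step i G : seq 'I_a -> Prop :=
  if unpickle i is Some u then
    if excluded_middle_informative (unbounded (avoiding G u)) then avoiding G u else G
  else G.

Fixpoint refine F i : seq 'I_a -> Prop := if i is i'.+1 then refine_step i' (refine F i') else F.

Definition refine_limit F v := forall i, refine F i v.

Lemma refine_step_sub i G v : refine_step i G v -> G v.
Proof.
rewrite /refine_step; case: (unpickle i) => [u|] //.
by case: excluded_middle_informative => _ // [].
Qed.

Lemma refine_step_factor_closed i G : factor_closed G -> factor_closed (refine_step i G).
Proof.
rewrite /refine_step => HG; case: (unpickle i) => [u|] //.
case: excluded_middle_informative => // Hu x y Hxy [Gy Ay]; split; first exact: HG Hxy Gy.
by apply: contra Ay => Hux; apply: infix_trans Hux Hxy.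
Qed.

Lemma refine_step_unbounded i G : unbounded G -> unbounded (refine_step i G).
Proof.
by rewrite /refine_step; case: (unpickle i) => [u|] //; case: excluded_middle_informative.
Qed.

Lemma refine_factor_closed F i : factor_closed F -> factor_closed (refine F i).
Proof. by move=> HF; elim: i => [|i IH] //=; apply: refine_step_factor_closed. Qed.

Lemma refine_unbounded F i : unbounded F -> unbounded (refine F i).
Proof. by move=> HF; elim: i => [|i IH] //=; apply: refine_step_unbounded. Qed.

Lemma refine_antimono F i j v : i <= j -> refine F j v -> refine F i v.
Proof. by move=> /subnK <-; elim: (j - i) => [|e IH] //= H; apply/IH/(refine_step_sub H). Qed.

Lemma refine_limit_factor_closed F : factor_closed F -> factor_closed (refine_limit F).
Proof. by move=> HF u v Huv Hv i; apply: refine_factor_closed HF _ _ Huv (Hv i). Qed.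

(* Words of a fixed length form a finite set, so a length-[L] word in every [refine F i]
   exists as soon as each of them is unbounded. *)
Lemma refine_limit_unbounded F : unbounded F -> unbounded (refine_limit F).
Proof.
move=> HF L; apply: NNPP => Hn.
have Hfail (t : L.-tuple 'I_a) : exists i, ~ refine F i t.
  by apply: not_all_ex_not => Ht; apply: Hn; exists t; rewrite ?size_tuple.
have [i Hi] := @ex_uniform_threshold (L.-tuple 'I_a) (fun t i => ~ refine F i t)
  (fun t i j H Hij HF' => H (refine_antimono Hij HF')) Hfail.
have [v /eqP Hv HFv] := refine_unbounded i HF L.
exact: (Hi (Tuple Hv)).
Qed.

(* Every finite word [u] was discarded from [refine_limit F] whenever that was possible; so if
   [u] occurs in the limit, the [u]-avoiding words of the limit have bounded length. *)
Lemma almost_periodic_word F : factor_closed F -> unbounded F ->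
  exists w : nat -> 'I_a, almost_periodic w /\ forall s L, F (factor w s L).
Proof.
move=> HF Hinf.
have [w Hw] := konig_word (refine_limit_factor_closed HF) (refine_limit_unbounded Hinf).
exists w; split; last by move=> s L; exact: (Hw s L 0).
move=> s L _; set u := factor w s L.
have := Hw s L (pickle u).+1; rewrite /= /refine_step pickleK.
case: excluded_middle_informative => [_ [_]|Hbd _]; first by rewrite infix_refl.
have [L0 HL0] := not_all_ex_not _ _ Hbd.
exists L0 => s' L' _ HL'; set f := factor w s' L'.
have Hsf : size f = L' by rewrite size_map size_iota.
apply: (@infix_trans _ (take L0 f)); last exact: infix_take.
apply: NNPP => Hni; apply: HL0; exists (take L0 f); first by rewrite size_takel // Hsf.
split; last by apply/negP.
exact: (refine_limit_factor_closed HF (infix_take f L0) (Hw s' L')).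
Qed.

End Languages.

Definition Delta_leb n (N : 'I_n -> {set 'I_n}) (U W : {set 'I_n}) d : bool :=
  [forall u in U, #|N u :&: W| <= d] && [forall w in W, #|N w :&: U| <= d].

Lemma Delta_lebP n (N : 'I_n -> {set 'I_n}) U W d :
  reflect (Delta_le N U W d) (Delta_leb N U W d).
Proof.
apply: (iffP andP) => [[/forall_inP H1 /forall_inP H2] | [H1 H2]]; split => //.
  by apply/forall_inP.
by apply/forall_inP.
Qed.

Lemma Delta_le_imset m n (N' : 'I_m -> {set 'I_m}) (N : 'I_n -> {set 'I_n}) (f : 'I_m -> 'I_n)
    (U W : {set 'I_m}) d :
  injective f -> (forall y (B : {set 'I_m}), N (f y) :&: f @: B = f @: (N' y :&: B)) ->
  Delta_le N' U W d -> Delta_le N (f @: U) (f @: W) d.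
Proof.
move=> Hf HN [H1 H2].
by split=> _ /imsetP [y Hy ->]; rewrite HN card_imset //; [apply: H1 | apply: H2].
Qed.

Section Bags.

Variables (n l : nat) (g : graph n) (lab : 'I_n -> option 'I_l).

Definition bag (a : 'I_l) : {set 'I_n} := [set x | lab x == Some a].

Lemma mem_bag a x : (x \in bag a) = (lab x == Some a).
Proof. by rewrite inE. Qed.

Definition unlabelled : {set 'I_n} := [set x | lab x == None].

Definition near_partition d c :=
  #|unlabelled| < c /\
  forall a b, Delta_le (nbhd g) (bag a) (bag b) d \/ Delta_le (nonnbhd g) (bag a) (bag b) d.

Definition dense d : rel 'I_l := fun a b => ~~ Delta_leb (nbhd g) (bag a) (bag b) d.

Lemma dense_sym d : symmetric (dense d).
Proof. by move=> a b; rewrite /dense /Delta_leb andbC. Qed.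

Definition twist (H : rel 'I_l) : rel 'I_n := fun x y =>
  if (lab x, lab y) is (Some a, Some b) then (x != y) && (((x, y) \in g) (+) H a b) else false.

Lemma twist_sym H : simple_graph g -> symmetric H -> symmetric (twist H).
Proof.
move=> [_ gsym] Hsym x y; rewrite /twist eq_sym gsym.
by case: (lab x) => [a|]; case: (lab y) => [b|] //; rewrite Hsym.
Qed.

Lemma twist_irr H : irreflexive (twist H).
Proof. by move=> x; rewrite /twist eqxx; case: (lab x). Qed.

Lemma twistE H x y a b : lab x = Some a -> lab y = Some b ->
  twist H x y = (x != y) && (((x, y) \in g) (+) H a b).
Proof. by rewrite /twist => -> ->. Qed.

Lemma twist_deg d c x : near_partition d c -> #|[set y | twist (dense d) x y]| <= l * d.
Proof.
move=> [_ HD]; case Ex: (lab x) => [a|]; last first.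
  by rewrite (_ : [set y | _] = set0) ?cards0 //; apply/setP => y; rewrite !inE /twist Ex.
have Hsub : [set y | twist (dense d) x y] \subset
    \bigcup_(b < l) ([set y | twist (dense d) x y] :&: bag b).
  apply/subsetP => y Hy; apply/bigcupP.
  have [b Ey] : exists b, lab y = Some b.
    by move: Hy; rewrite inE /twist Ex; case: (lab y) => [b _|]; [exists b|].
  by exists b; rewrite // in_setI Hy mem_bag Ey eqxx.
apply: leq_trans (subset_leq_card Hsub) _; apply: leq_trans (card_bigcup_le _ _ _) _.
rewrite -[l in l * d]card_ord -sum_nat_const; apply: leq_sum => b _.
have Hxa : x \in bag a by rewrite mem_bag Ex.
have Etw y : y \in bag b -> twist (dense d) x y = (x != y) && (((x, y) \in g) (+) dense d a b).
  by rewrite mem_bag => /eqP; apply: twistE.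
case Hab: (dense d a b).
- have [/Delta_lebP Hle|[H1 _]] := HD a b; first by rewrite /dense Hle in Hab.
  apply: leq_trans (H1 x Hxa); apply/subset_leq_card/subsetP => y.
  rewrite in_setI inE => /andP [Hs Hy]; rewrite in_setI Hy andbT.
  by move: Hs; rewrite Etw // Hab addbT !inE negb_or eq_sym => /andP [-> ->].
- have [H1 _] : Delta_le (nbhd g) (bag a) (bag b) d by apply/Delta_lebP; move/negbFE: Hab.
  apply: leq_trans (H1 x Hxa); apply/subset_leq_card/subsetP => y.
  rewrite in_setI inE => /andP [Hs Hy]; rewrite in_setI Hy andbT.
  by move: Hs; rewrite Etw // Hab addbF inE => /andP [].
Qed.

End Bags.

Lemma near_partition_of_strong n m (g : graph n) (f : 'I_m -> 'I_n) l d c :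
  injective f -> n - m < c -> strong_ld_graph (induced g f) l d ->
  exists lab : 'I_n -> option 'I_l, near_partition g lab d c.
Proof.
move=> Hf Hc [p [HD _]].
pose lab x := omap p [pick y | f y == x].
have lab_f y : lab (f y) = Some (p y).
  rewrite /lab; case: pickP => [y' /eqP /Hf -> //|/(_ y)]; by rewrite eqxx.
have Ebag a : bag lab a = f @: [set y | p y == a].
  apply/setP => x; rewrite mem_bag; apply/eqP/imsetP => [|[y Hy ->]].
    rewrite /lab; case: pickP => [y /eqP <- /= [<-]|_ //=]; by exists y; rewrite ?inE.
  by rewrite lab_f; move: Hy; rewrite inE => /eqP ->.
exists lab; split.
  have -> : unlabelled lab = ~: (f @: setT).
    apply/setP => x; rewrite !inE; apply/eqP/negP => [Hx /imsetP [y _ Ex]|Hx].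
      by rewrite Ex lab_f in Hx.
    by rewrite /lab; case: pickP => // y /eqP Ey; case: Hx; rewrite -Ey imset_f.
  by rewrite cardsCs setCK card_imset // !cardsT !card_ord.
move=> a b; rewrite !Ebag.
have Einduced y (B : {set 'I_m}) :
    nbhd g (f y) :&: f @: B = f @: (nbhd (induced g f) y :&: B).
  apply/setP => z; apply/setIP/imsetP => [[Hz /imsetP [x Hx Ez]]|[x]].
    by exists x; rewrite // in_setI Hx andbT !inE -Ez; rewrite inE in Hz.
  by rewrite !inE => /andP [Hyx Hx] ->; rewrite imset_f.
have Einduced' y (B : {set 'I_m}) :
    nonnbhd g (f y) :&: f @: B = f @: (nonnbhd (induced g f) y :&: B).
  apply/setP => z; apply/setIP/imsetP => [[Hz /imsetP [x Hx Ez]]|[x]].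
    by exists x; rewrite // in_setI Hx andbT; move: Hz; rewrite Ez !inE (inj_eq Hf).
  move=> /setIP [Hyx Hx] ->; split; last exact: imset_f.
  by move: Hyx; rewrite !inE (inj_eq Hf).
case: (HD a b) => H; [left; exact: Delta_le_imset Hf Einduced H |
                      right; exact: Delta_le_imset Hf Einduced' H].
Qed.

Definition row_of n c (R : {ffun 'I_c -> {set 'I_n}}) (i : nat) (y : 'I_n) : bool :=
  [exists o : 'I_c, (val o == i) && (y \in R o)].

Definition rows_of n c (g : graph n) (T : {set 'I_n}) : {ffun 'I_c -> {set 'I_n}} :=
  [ffun o => [set y | [exists x, [&& x \in T, index x (enum T) == val o & (x, y) \in g]]]].

Lemma row_of_rows n c (g : graph n) (T : {set 'I_n}) x y :
  #|T| < c -> x \in T -> row_of (rows_of c g T) (index x (enum T)) y = ((x, y) \in g).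
Proof.
move=> Hc Hx; have HxT : x \in enum T by rewrite mem_enum.
apply/existsP/idP => [[o /andP [/eqP Ho]]|Hg].
  rewrite ffunE inE => /existsP [x' /and3P [Hx' /eqP Hi Hg]].
  suff <- : x' = x by [].
  by rewrite -[x'](nth_index x (_ : x' \in enum T)) ?mem_enum // Hi Ho nth_index.
have Hlt : index x (enum T) < c by apply: leq_trans Hc; rewrite ltnS cardE ltnW // index_mem.
by exists (Ordinal Hlt); rewrite eqxx ffunE inE; apply/existsP; exists x; rewrite Hx eqxx Hg.
Qed.

(* A graph is recovered from its labelling, the pattern [H], the rows of the (fewer than [c])
   unlabelled vertices, and the edges of its twist by [H]. *)
Definition decode n l c (code : {ffun 'I_n -> option 'I_l} * {ffun 'I_l * 'I_l -> bool} *
    {ffun 'I_c -> {set 'I_n}} * {set 'I_n * 'I_n}) : graph n :=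
  let: (lab, H, R, E) := code in
  [set xy | match lab xy.1, lab xy.2 with
            | Some a, Some b => (xy.1 != xy.2) && ((xy \in E) (+) H (a, b))
            | None, _ => row_of R (index xy.1 (enum (unlabelled lab))) xy.2
            | _, None => row_of R (index xy.2 (enum (unlabelled lab))) xy.1
            end].

Lemma decode_twist n l c (g : graph n) (lab : 'I_n -> option 'I_l) (H : rel 'I_l) :
  simple_graph g -> #|unlabelled lab| < c ->
  g = decode ([ffun x => lab x], [ffun ab => H ab.1 ab.2], rows_of c g (unlabelled lab),
              [set xy | twist g lab H xy.1 xy.2]).
Proof.
move=> [girr gsym] Hc; apply/setP => -[x y]; rewrite inE /=.
have -> : unlabelled [ffun x => lab x] = unlabelled lab by apply/setP => z; rewrite !inE ffunE.
rewrite !ffunE.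
have Hun z : lab z = None -> z \in unlabelled lab by rewrite inE => ->.
case Ex: (lab x) => [a|]; last by rewrite row_of_rows ?Hun.
case Ey: (lab y) => [b|]; last by rewrite row_of_rows ?Hun // gsym.
rewrite inE /= (twistE _ _ Ex Ey) ffunE /=.
case: (x =P y) => [<-|_] /=; first by rewrite (negbTE (girr x)).
by case: ((x, y) \in g); case: (H a b).
Qed.

Definition component_of n (r : {ffun 'I_n -> 'I_n}) x : {set 'I_n} := [set z | r z == r x].

(* An edge relation with components of size at most [s] is recovered from the map sending each
   vertex to the root of its component and, for each vertex, the positions of its neighbours
   in the enumeration of its component. *)
Definition decode_components n s (code : {ffun 'I_n -> 'I_n} * {ffun 'I_n -> {set 'I_s}}) :
    {set 'I_n * 'I_n} :=
  [set xy | (code.1 xy.1 == code.1 xy.2) &&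
     [exists o : 'I_s, (val o == index xy.2 (enum (component_of code.1 xy.1))) &&
                       (o \in code.2 xy.1)]].

Section Components.

Variables (n : nat) (S : rel 'I_n).
Hypothesis Ssym : symmetric S.

Let root_map := [ffun z => root S z].

Lemma component_of_root x : component_of root_map x = [set z | connect S x z].
Proof.
have Hc := sym_connect_sym Ssym.
by apply/setP => z; rewrite !inE !ffunE (root_connect Hc) Hc.
Qed.

Lemma decode_components_root s : (forall x, #|[set y | connect S x y]| <= s) ->
  [set xy | S xy.1 xy.2] =
  decode_components (root_map,
    [ffun x => [set o : 'I_s | S x (nth x (enum (component_of root_map x)) o)]]).
Proof.
move=> Hs; apply/setP => -[x y]; rewrite !inE /=.
have Hcomp z : (z \in component_of root_map x) = connect S x z by rewrite component_of_root inE.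
apply/idP/andP => [Sxy|[Hr /existsP [o /andP [/eqP Ho]]]]; last first.
  by rewrite ffunE inE Ho nth_index // mem_enum inE eq_sym.
have Hy : y \in enum (component_of root_map x) by rewrite mem_enum Hcomp connect1.
split; first by rewrite !ffunE (root_connect (sym_connect_sym Ssym)) connect1.
have Hlt : index y (enum (component_of root_map x)) < s.
  by apply: leq_trans (Hs x); rewrite -(component_of_root x) cardE index_mem.
by apply/existsP; exists (Ordinal Hlt); rewrite eqxx ffunE inE /= nth_index.
Qed.

Definition many_fixpoints t : {set {ffun 'I_n -> 'I_n}} :=
  [set r : {ffun 'I_n -> 'I_n} | t <= #|[set x | r x == x]|].

Lemma root_many_fixpoints s : 0 < s -> (forall x, #|[set y | connect S x y]| <= s) ->
  root_map \in many_fixpoints (n %/ s).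
Proof.
move=> Hs0 Hs; rewrite inE; have Hc := sym_connect_sym Ssym.
have Hcover :
    [set: 'I_n] \subset \bigcup_(z in [set x | root_map x == x]) component_of root_map z.
  apply/subsetP => x _; apply/bigcupP; exists (root S x); rewrite !inE !ffunE ?(root_root Hc) //.
rewrite -(leq_pmul2r Hs0); apply: leq_trans (leq_divM n s) _.
have := subset_leq_card Hcover; rewrite cardsT card_ord => /leq_trans; apply.
apply: leq_trans (card_bigcup_le _ _ _) _.
by rewrite -sum_nat_const; apply: leq_sum => z _; rewrite component_of_root.
Qed.

End Components.

Lemma card_sets (T : finType) : #|{set T}| = 2 ^ #|T|.
Proof. by rewrite -(cardsT T) -card_powerset powersetT cardsT. Qed.

Lemma card_fixing n (A : {set 'I_n}) :
  #|[set r : {ffun 'I_n -> 'I_n} | [forall x in A, r x == x]]| <= n ^ (n - #|A|).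
Proof.
pose h (r : {ffun 'I_n -> 'I_n}) := [ffun i : 'I_#|~: A| => r (enum_val i)].
rewrite -(card_in_imset (f := h)); last first.
  move=> r1 r2; rewrite !inE => /forall_inP H1 /forall_inP H2 Eh; apply/ffunP => x.
  case Hx: (x \in A); first by rewrite (eqP (H1 x Hx)) (eqP (H2 x Hx)).
  have HxC : x \in ~: A by rewrite inE Hx.
  rewrite -(enum_rankK_in HxC HxC).
  by move/ffunP: Eh => /(_ (enum_rank_in HxC x)); rewrite !ffunE.
apply: leq_trans (max_card _) _.
by rewrite card_ffun !card_ord -[n in n - _](card_ord n) -(cardsC A) addKn.
Qed.

Lemma card_many_fixpoints n t : #|many_fixpoints n t| <= 2 ^ n * n ^ (n - t).
Proof.
have Hsub : many_fixpoints n t \subset \bigcup_(A : {set 'I_n} | t <= #|A|)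
    [set r : {ffun 'I_n -> 'I_n} | [forall x in A, r x == x]].
  apply/subsetP => r; rewrite inE => Hr; apply/bigcupP; exists [set x | r x == x] => //.
  by rewrite inE; apply/forall_inP => x; rewrite inE.
apply: leq_trans (subset_leq_card Hsub) _; apply: leq_trans (card_bigcup_le _ _ _) _.
apply: (@leq_trans (\sum_(A : {set 'I_n}) n ^ (n - t))); last first.
  by rewrite sum_nat_const card_sets card_ord.
rewrite big_mkcond /=; apply: leq_sum => A _; case: ifP => // HA.
apply: leq_trans (card_fixing A) _; move: #|A| HA => a Ha.
have [->|Hn] := posnP n; first by rewrite !sub0n.
by rewrite leq_pexp2l // leq_sub2l.
Qed.

Lemma card_twisted_le n l c s (P : graph n -> Prop) : 0 < s ->
  (forall g, P g -> exists (lab : 'I_n -> option 'I_l) (H : rel 'I_l),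
     [/\ simple_graph g, #|unlabelled lab| < c, symmetric (twist g lab H) &
         forall x, #|[set y | connect (twist g lab H) x y]| <= s]) ->
  forall Sx : {set graph n}, (forall g, g \in Sx -> P g) ->
  #|Sx| <= l.+1 ^ n * 2 ^ (l * l) * (2 ^ n) ^ c * (2 ^ n * n ^ (n - n %/ s) * (2 ^ s) ^ n).
Proof.
move=> Hs HP Sx HSx.
pose Codes :=
  setX (setX (setX [set: {ffun 'I_n -> option 'I_l}] [set: {ffun 'I_l * 'I_l -> bool}])
             [set: {ffun 'I_c -> {set 'I_n}}])
       (@decode_components n s @:
          setX (many_fixpoints n (n %/ s)) [set: {ffun 'I_n -> {set 'I_s}}]).
have Hsub : Sx \subset @decode n l c @: Codes.
  apply/subsetP => g Hg; have [lab [H [Hsimp Hc Hsym Hcomp]]] := HP g (HSx g Hg).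
  rewrite (decode_twist H Hsimp Hc) (decode_components_root Hsym Hcomp); apply: imset_f.
  by rewrite !inE /= imset_f // in_setX in_setT andbT root_many_fixpoints.
apply: leq_trans (subset_leq_card Hsub) _; apply: leq_trans (leq_imset_card _ _) _.
rewrite !cardsX !cardsT !card_ffun !card_sets card_option card_prod card_bool !card_ord.
rewrite leq_mul2l; apply/orP; right; apply: leq_trans (leq_imset_card _ _) _.
rewrite cardsX cardsT card_ffun card_sets !card_ord leq_mul2r; apply/orP; right.
exact: card_many_fixpoints.
Qed.

Lemma count_exponent_lt l c s j n t : 0 < s -> j < n -> t * s <= n -> n < t.+1 * s ->
  (2*s) * (l + c + 1 + s) + (2*s) * (l * l) + 2 * s + 1 <= j ->
  (n * l + l * l + n * c + (n + j * (n - t) + s * n)) * (2 * s) < j * ((2 * s - 1) * n).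
Proof.
move=> Hs Hjn Hts Hnt Hj.
have H1 : s * (n - t) <= s * n - n + s by nia.
have H2 : (2 * s) * (j * (n - t)) <= 2 * (j * (s * n - n + s)).
  have -> : (2 * s) * (j * (n - t)) = 2 * (j * (s * (n - t))) by ring.
  by rewrite leq_mul2l leq_mul2l H1 !orbT.
have H3 : j * n <= j * (s * n) by rewrite leq_mul2l leq_pmull ?orbT.
have E2 : j * (s * n - n + s) = j * (s * n) - j * n + j * s by rewrite mulnDr mulnBr.
have E3 : j * ((2 * s - 1) * n) = 2 * (j * (s * n)) - j * n.
  by rewrite mulnBl mul1n mulnBr; congr (_ - _); ring.
have H4 : (2 * s * (l + c + 1 + s) + 2 * s * (l * l) + 2 * s + 1) * n <= j * n.
  by rewrite leq_mul2r Hj orbT.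
have E1 : (n * l + l * l + n * c + (n + j * (n - t) + s * n)) * (2 * s) =
    2 * s * (n * (l + c + 1 + s)) + 2 * s * (l * l) + (2 * s) * (j * (n - t)) by ring.
have E4 : (2 * s * (l + c + 1 + s) + 2 * s * (l * l) + 2 * s + 1) * n =
    2 * s * (n * (l + c + 1 + s)) + 2 * s * (l * l) * n + 2 * (s * n) + n by ring.
have H5 : 2 * s * (l * l) <= 2 * s * (l * l) * n by rewrite leq_pmulr //; lia.
have H6 : j * s <= s * n by rewrite mulnC leq_mul2l (ltnW Hjn) orbT.
rewrite E1 E3; rewrite E2 in H2; rewrite E4 in H4; move: H2 H3 H4 H5 H6.
move: (2 * s * (n * (l + c + 1 + s))) (2 * s * (l * l)) (2 * s * (j * (n - t))) (j * (s * n)).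
move: (j * n) (j * s) (s * n) (2 * s * (l * l) * n); lia.
Qed.

(* [n ^ ((2s - 1) n)] is what [above_Bell] guarantees for [k = 2s], while the count of
   [card_twisted_le] is [2 ^ O(n) * n ^ (n - n/s)]; at [n = 2 ^ j] with [j] large the latter,
   raised to the power [2s], is smaller. *)
Lemma twisted_count_lt l c s j : 0 < s ->
  (2*s) * (l + c + 1 + s) + (2*s) * (l * l) + 2 * s + 1 <= j ->
  (l.+1 ^ 2 ^ j * 2 ^ (l * l) * (2 ^ 2 ^ j) ^ c *
     (2 ^ 2 ^ j * (2 ^ j) ^ (2 ^ j - 2 ^ j %/ s) * (2 ^ s) ^ 2 ^ j)) ^ (2 * s)
   < (2 ^ j) ^ ((2 * s - 1) * 2 ^ j).
Proof.
move=> Hs Hj.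
have Hlab : l.+1 ^ 2 ^ j <= (2 ^ 2 ^ j) ^ l.
  by rewrite -expnM mulnC expnM leq_exp2r ?expn_gt0 // ltn_expl.
apply: (@leq_ltn_trans (((2 ^ 2 ^ j) ^ l * 2 ^ (l * l) * (2 ^ 2 ^ j) ^ c *
     (2 ^ 2 ^ j * (2 ^ j) ^ (2 ^ j - 2 ^ j %/ s) * (2 ^ s) ^ 2 ^ j)) ^ (2 * s))).
  by rewrite leq_exp2r ?muln_gt0 ?Hs // !leq_mul2r Hlab !orbT.
have Hts := leq_divM (2 ^ j) s; have Hnt := ltn_ceil (2 ^ j) Hs.
rewrite -!expnM -!expnD -!expnM ltn_exp2l //.
move: (2 ^ j %/ s) Hts Hnt => t Hts Hnt.
move: (2 ^ j) (ltn_expl j (ltnSn 1)) Hts Hnt => n Hjn Hts Hnt.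
exact: count_exponent_lt.
Qed.

(* [a0] only pads [ws] beyond its length, which is never read. *)
Definition good_word (X : graph_class) l (H : rel 'I_l) (a0 : 'I_l) (ws : seq 'I_l) : Prop :=
  forall m (g : graph m) (u : 'I_m -> nat) (sigma : 'I_m -> 'I_m),
    (forall i, u i < size ws) -> (forall i j : 'I_m, i < j -> u i < u j) -> bijective sigma ->
    (forall i j, ((i, j) \in g) = GwH_adj (nth a0 ws) H (u (sigma i)) (u (sigma j))) ->
    X m g.

Lemma eq_good_word X l (H H' : rel 'I_l) a0 ws :
  H =2 H' -> good_word X H a0 ws -> good_word X H' a0 ws.
Proof.
move=> EH Hgood m g u sigma Hu Hmono Hbij Hg; apply: Hgood Hu Hmono Hbij _ => i j.
by rewrite Hg /GwH_adj !EH.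
Qed.

Lemma good_word_factor_closed X l (H : rel 'I_l) a0 : factor_closed (good_word X H a0).
Proof.
move=> ws ws' /infixP [p [q ->]] Hgood m g u sigma Hu Hmono Hbij Hg.
apply: (Hgood m g (fun i => size p + u i) sigma) => [i|i j Hij||i j] //.
- by rewrite !size_cat ltn_add2l ltn_addr.
- by rewrite ltn_add2l Hmono.
have nth_mid k : k < size ws -> nth a0 (p ++ ws ++ q) (size p + k) = nth a0 ws k.
  by move=> Hk; rewrite nth_cat ltnNge leq_addr /= addKn nth_cat Hk.
by rewrite Hg /GwH_adj /natdist !nth_mid ?Hu // !subnDl.
Qed.

Lemma induced_path_good_word X n l (g : graph n) (lab : 'I_n -> option 'I_l) (H : rel 'I_l) a0 L v :
  class_of_simple_graphs X -> hereditary X -> X n g -> 1 < L ->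
  induced_path (twist g lab H) L v ->
  good_word X H a0 [seq odflt a0 (lab (v k)) | k <- iota 0 L].
Proof.
move=> Hsimp Hher Xg HL [Hadj Hinj] m g' u sigma Hu Hmono Hbij Hg'.
rewrite size_map size_iota in Hu.
have u_inj : injective u.
  by move=> i j Eij; apply/val_inj; case: (ltngtP i j) => // /Hmono; rewrite Eij ltnn.
have labelled k : k < L -> exists a, lab (v k) = Some a.
  move=> Hk; have [k' Hk' Hd] : exists2 k', k' < L & natdist k k' = 1.
    by case: k Hk => [|k] Hk; [exists 1 | exists k]; rewrite // /natdist; lia.
  by move: (Hadj k k' Hk Hk'); rewrite Hd eqxx /twist; case: (lab (v k)) => [a _|]; [exists a|].
have letter k a :
    k < L -> lab (v k) = Some a -> nth a0 [seq odflt a0 (lab (v k)) | k <- iota 0 L] k = a.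
  by move=> Hk Ea; rewrite (nth_map 0) ?size_iota // nth_iota // add0n Ea.
have [girr _] := Hsimp _ _ Xg.
suff -> : g' = induced g (fun i => v (u (sigma i))).
  by apply: Hher Xg => i j /(Hinj _ _ (Hu _) (Hu _)) /u_inj; apply: bij_inj.
apply/setP => -[i j]; rewrite Hg' inE /=.
set p := u (sigma i); set q := u (sigma j).
have [a Ea] := labelled p (Hu _); have [b Eb] := labelled q (Hu _).
rewrite /GwH_adj (letter _ _ (Hu _) Ea) (letter _ _ (Hu _) Eb).
have [Epq|Npq] := eqVneq p q; first by rewrite Epq /natdist subnn (negbTE (girr _)).
have Hd : 0 < natdist p q by rewrite /natdist; move: Npq => /eqP; lia.
have := Hadj p q (Hu _) (Hu _); rewrite (twistE _ _ Ea Eb).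
have -> : v p != v q by apply: contra_neq Npq => /(Hinj _ _ (Hu _) (Hu _)).
case: eqP Hd => [-> _|Hd1 Hd] /=; first by case: (H a b); case: ((v p, v q) \in g).
have -> : 1 < natdist p q by lia.
by case: (H a b); case: ((v p, v q) \in g).
Qed.

Section Class.

Variables (X : graph_class) (l d c : nat).
Hypotheses (Xsimple : class_of_simple_graphs X) (Xbell : above_Bell X).
Hypothesis Xlab :
  forall n (g : graph n), X g -> exists lab : 'I_n -> option 'I_l, near_partition g lab d c.

Lemma bag_count_gt0 : 0 < l.
Proof.
have [N HN] := Xbell (ltn0Sn 0).
have [S [HS]] := HN (maxn N c) (leq_maxl _ _).
rewrite mul0n expn0 expn1 card_gt0 => /set0Pn [g /HS /Xlab [lab [Hc _]]].
rewrite lt0n; apply/negP => /eqP l0.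
have : unlabelled lab = setT by apply/setP => x; rewrite !inE; case: (lab x) => // -[k]; rewrite l0.
by move=> Eun; move: Hc; rewrite Eun cardsT card_ord ltnNge leq_maxr.
Qed.

Lemma long_induced_paths L : exists n (g : graph n) (lab : 'I_n -> option 'I_l) (v : nat -> 'I_n),
  [/\ X g, near_partition g lab d c & induced_path (twist g lab (dense g lab d)) L v].
Proof.
apply: NNPP => Hno; pose s := (l * d).+1 ^ L.
have Hs : 0 < s by rewrite expn_gt0.
have Hcomp n (g : graph n) (lab : 'I_n -> option 'I_l) : X g -> near_partition g lab d c ->
    forall x, #|[set y | connect (twist g lab (dense g lab d)) x y]| <= s.
  move=> Xg Hp; apply: (card_connect_le (twist_sym lab (Xsimple Xg) (dense_sym g lab d))
    (twist_irr _ _ _)) => [z|v Hv]; first exact: twist_deg Hp.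
  by apply: Hno; exists n, g, lab, v.
have [N HN] := Xbell (leq_trans Hs (leq_pmull s (ltn0Sn 1))).
pose j := N + ((2 * s) * (l + c + 1 + s) + (2 * s) * (l * l) + 2 * s + 1).
have [Sx [HSx Hbig]] := HN (2 ^ j) (leq_trans (leq_addr _ N) (ltnW (ltn_expl j (ltnSn 1)))).
have Hcount := card_twisted_le Hs _ HSx.
have := @twisted_count_lt l c s j Hs (leq_addl _ _).
rewrite ltnNge => /negP; apply; apply: leq_trans Hbig _.
rewrite leq_exp2r ?muln_gt0 ?Hs //; apply: Hcount => g /[dup] Xg /Xlab [lab Hp].
exists lab, (dense g lab d); split; [exact: Xsimple Xg | by case: Hp | | exact: Hcomp].
exact: twist_sym (Xsimple Xg) (dense_sym g lab d).
Qed.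

Hypothesis Xhered : hereditary X.

Lemma unbounded_good_words (a0 : 'I_l) :
  exists2 H : rel 'I_l, symmetric H & unbounded (good_word X H a0).
Proof.
pose P (h : {ffun 'I_l * 'I_l -> bool}) L :=
  symmetric (fun a b => h (a, b)) /\
  exists2 ws, size ws = L & good_word X (fun a b => h (a, b)) a0 ws.
have [h Hh] : exists h, forall L, P h L.
  apply: infinite_pigeonhole => [h L L' [hsym [ws Hws Hgood]] HL|L].
    split=> //; exists (take L ws); first by rewrite size_takel // Hws.
    exact: good_word_factor_closed (infix_take ws L) Hgood.
  have [n [g [lab [v [Xg Hp Hpath]]]]] := long_induced_paths L.+2.
  have Eh : dense g lab d =2 (fun a b => [ffun ab => dense g lab d ab.1 ab.2] (a, b)).
    by move=> a b; rewrite ffunE.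
  exists [ffun ab => dense g lab d ab.1 ab.2]; split; first by move=> a b; rewrite -!Eh dense_sym.
  have Hgood := induced_path_good_word (a0 := a0) Xsimple Xhered Xg (ltn0Sn L.+1 : 1 < L.+2) Hpath.
  exists (take L [seq odflt a0 (lab (v k)) | k <- iota 0 L.+2]).
    by rewrite size_takel // size_map size_iota leqW.
  exact: eq_good_word Eh (good_word_factor_closed (infix_take _ L) Hgood).
exists (fun a b => h (a, b)); first by case: (Hh 0).
by move=> L; have [_ [ws]] := Hh L; exists ws.
Qed.

End Class.

Theorem theorem3p13 (X : graph_class) (l d c : nat) :
  class_of_simple_graphs X ->
  hereditary X ->
  above_Bell X ->
  ~ dist_number_infinite X ->
  (forall n (g : graph n), X n g ->
     exists m (f : 'I_m -> 'I_n),
       [/\ injective f, n - m < c & strong_ld_graph (induced g f) l d]) ->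
  exists a (w : nat -> 'I_a) (H : rel 'I_a),
    [/\ a <= l, symmetric H, almost_periodic w &
        forall m (g : graph m), in_P w H g -> X m g].
Proof.
(* The distinguishing number only serves to produce [l], [d] and [c], which are given here. *)
move=> Xsimple Xhered Xbell _ Xstrong.
have Xlab n (g : graph n) : X n g -> exists lab : 'I_n -> option 'I_l, near_partition g lab d c.
  by case/Xstrong=> m [f [Hf Hc Hs]]; apply: near_partition_of_strong Hf Hc Hs.
pose a0 : 'I_l := Ordinal (bag_count_gt0 Xbell Xlab).
have [H Hsym Hgood] := unbounded_good_words Xsimple Xbell Xlab Xhered a0.
have [w [Hap Hfactors]] := almost_periodic_word (@good_word_factor_closed X l H a0) Hgood.
exists l, w, H; split=> // m g [u [_ [Hmono [sigma [Hbij Hg]]]]].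
pose N := (\max_(i < m) u i).+1.
have HuN i : u i < N by rewrite ltnS (leq_bigmax i).
have Hnth p : p < N -> nth a0 (factor w 0 N) p = w p.
  by move=> Hp; rewrite (nth_map 0) ?size_iota // nth_iota.
apply: (Hfactors 0 N m g u sigma) => // [i|i j]; first by rewrite size_map size_iota.
by rewrite Hg /GwH_adj !Hnth.
Qed.
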